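(* For integers $0\le d\le r<\min\{m,n\}$ with $d\le\min\{m,n\}-r-1$, there is an isomorphism of $\mathfrak{S}_n\times\mathfrak{S}_m$-modules $R(\mathcal{Z}_{n,m,r})_d\cong R(\mathcal{Z}_{n,m,r+1})_d$.
   Context: Fix positive integers $n,m$. $\mathbb{C}[\mathbf{x}_{n\times m}]$ is the polynomial ring in variables $x_{i,j}$; $\mathfrak{S}_n\times\mathfrak{S}_m$ acts by $(g,h)\cdot x_{i,j}=x_{g(i),h(j)}$. For finite stable $\mathcal{Z}\subseteq\mathrm{Mat}_{n\times m}(\mathbb{C})$, $R(\mathcal{Z})=\mathbb{C}[\mathbf{x}_{n\times m}]/\mathrm{gr}\,\mathbf{I}(\mathcal{Z})$, where $\mathbf{I}(\mathcal{Z})$ is the vanishing ideal and $\mathrm{gr}\,\mathbf{I}(\mathcal{Z})$ the ideal generated by top-degree homogeneous components of its nonzero elements; $R(\mathcal{Z})_d$ is its degree-$d$ component. $\mathcal{Z}_{n,m,r}$ is the set of $n\times m$ $0/1$ matrices with exactly $r$ ones and at most one $1$ in each row and column. *)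

From HB Require Import structures.
From mathcomp Require Import all_boot all_algebra all_fingroup.
From mathcomp Require Import Rstruct.
From mathcomp Require Import complex.
From mathcomp.multinomials Require Import mpoly.

Set Implicit Arguments.
Unset Strict Implicit.
Unset Printing Implicit Defensive.

Import GRing.Theory.
Local Open Scope ring_scope.

Definition CC : fieldType := complex.complex Rdefinitions.R.

Definition nvar (n m : nat) : nat := #|{: 'I_n * 'I_m}|.

(* The polynomial ring C[x_{n x m}]; variables are indexed by the pairs (i,j)
   through enum_rank. *)
Definition Poly (n m : nat) := {mpoly CC[nvar n m]}.

Definition xvar (n m : nat) (i : 'I_n) (j : 'I_m) : Poly n m :=
  'X_(enum_rank (i, j)).

Definition Sact (n m : nat) (gh : {perm 'I_n} * {perm 'I_m}) (p : Poly n m)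
  : Poly n m :=
  comp_mpoly [tuple xvar (gh.1 (enum_val k).1) (gh.2 (enum_val k).2)
             | k < nvar n m] p.

Definition evalM (n m : nat) (Z : 'M[CC]_(n, m)) (p : Poly n m) : CC :=
  p.@[fun k : 'I_(nvar n m) => Z (enum_val k).1 (enum_val k).2].

Definition vanishing (n m : nat) (Z : 'M[CC]_(n, m) -> Prop) (p : Poly n m)
  : Prop :=
  forall M, Z M -> evalM M p = 0.

(* Top-degree homogeneous component of a polynomial
   (msize p = 1 + total degree of p). *)
Definition topcomp (k : nat) (p : {mpoly CC[k]}) : {mpoly CC[k]} :=
  \sum_(mo <- msupp p | mdeg mo == (msize p).-1) p@_mo *: 'X_[mo].

(* gr I(Z): the ideal generated by the top-degree components of the nonzero
   elements of I(Z); membership = being a finite combination sum a_i * t_i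
   with each t_i such a top-degree component. *)
Definition grI (n m : nat) (Z : 'M[CC]_(n, m) -> Prop) (f : Poly n m) : Prop :=
  exists s : seq (Poly n m * Poly n m),
    (forall q, q \in s ->
       exists g : Poly n m, [/\ g != 0, vanishing Z g & q.2 = topcomp g])
    /\ f = \sum_(q <- s) q.1 * q.2.

Definition Zrook (n m r : nat) (M : 'M[CC]_(n, m)) : Prop :=
  [/\ (forall i j, M i j = (0%R : CC) \/ M i j = (1%R : CC)),
      #|[set ij : 'I_n * 'I_m | M ij.1 ij.2 == (1%R : CC)]| = r,
      (forall i : 'I_n, (#|[set j : 'I_m | M i j == (1%R : CC)]| <= 1)%N) &
      (forall j : 'I_m, (#|[set i : 'I_n | M i j == (1%R : CC)]| <= 1)%N)].

(* Isomorphism of G-modules between two quotients A/(W1 /\ A) and A/(W2 /\ A)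
   of a common G-stable subspace A of an ambient K-module V (G acting on V via
   act).  An isomorphism of the quotients is given through a function psi on
   representatives: it is well defined and injective on classes, K-linear on
   classes, G-equivariant on classes and surjective on classes. *)
Definition quot_Gmod_iso (G : Type) (K : nzRingType) (V : lmodType K)
    (act : G -> V -> V) (A W1 W2 : V -> Prop) : Prop :=
  exists psi : V -> V,
    [/\ forall a, A a -> A (psi a),
        forall a b, A a -> A b -> (W1 (a - b) <-> W2 (psi a - psi b)),
        forall (c : K) a b, A a -> A b ->
          W2 (psi (c *: a + b) - (c *: psi a + psi b)),
        forall g a, A a -> W2 (psi (act g a) - act g (psi a)) &
        forall c, A c -> exists2 a, A a & W2 (psi a - c)].

(* R(Z)_d = C[x]_d / (gr I(Z))_d ; the isomorphism R(Z)_d ~= R(Z')_d of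
   S_n x S_m-modules. *)
Definition Rdeg_iso (n m d : nat) (Z1 Z2 : 'M[CC]_(n, m) -> Prop) : Prop :=
  quot_Gmod_iso (@Sact n m) (fun p : Poly n m => p \is d.-homog)
    (grI Z1) (grI Z2).

From Pilot Require Import Defs.
From HB Require Import structures.
From mathcomp Require Import all_boot all_algebra all_fingroup.
From mathcomp Require Import Rstruct complex.
From mathcomp.multinomials Require Import mpoly.
From mathcomp Require Import zify.

Set Implicit Arguments.
Unset Strict Implicit.
Unset Printing Implicit Defensive.

Import GRing.Theory Num.Theory.
Local Open Scope ring_scope.

(* A homogeneous f of degree d lies in gr I(Z) exactly when some g
   vanishing on Z agrees with f in all degrees >= d.  On 0/1 matrices a monomial
   only sees its support, so vanishing on Z_{n,m,k} is a linear condition on the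
   coefficients of g summed by support, indexed by non-attacking rook placements.
   Double counting placements and an exchange argument (induction on d) show
   that, for d <= k and k + d <= min(n, m), this condition on f is equivalent to
   the k-free condition [lower_expansion]: the coefficient of each square-free
   placement monomial of degree d is a sum over the proper subsets of its
   support of one fixed function.  Hence gr I(Z_{n,m,r}) and gr I(Z_{n,m,r+1})
   have the same degree d part, and the identity is the isomorphism. *)

Lemma card_setD1D1 (T : finType) (B : {set T}) x y : (#|B| <= #|B :\ x :\ y|.+2)%N.
Proof. by have := cardsD1 x B; have := cardsD1 y (B :\ x); lia. Qed.

Lemma card_sum_nat (T : finType) (A : {set T}) : #|A| = (\sum_x (x \in A))%N.
Proof. by rewrite -sum1_card big_mkcond; apply: eq_bigr => x _; case: (x \in A). Qed.

Lemma sum_leq_eq (T : finType) (a b : T -> nat) :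
  (forall x, a x <= b x)%N -> (\sum_x b x <= \sum_x a x)%N -> forall x, a x = b x.
Proof.
move=> ab le x; apply/eqP; rewrite eqn_leq ab leqNgt; apply/negP => lt.
have : (\sum_(y | y != x) a y <= \sum_(y | y != x) b y)%N by apply: leq_sum.
by move: le; rewrite (bigD1 x) //= [X in (_ <= X)%N](bigD1 x) //=; lia.
Qed.

Section Draws.
Variables (T : finType) (R : nmodType).

Definition sum_draws (c : {set T} -> R) (M : {set T}) (j : nat) : R :=
  \sum_(S : {set T} | (S \subset M) && (#|S| == j)) c S.

Lemma card_draws_between (U M : {set T}) (j : nat) : U \subset M -> (#|U| <= j)%N ->
  #|[set S : {set T} | (U \subset S) && (S \subset M) && (#|S| == j)]|
  = 'C(#|M| - #|U|, j - #|U|).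
Proof.
move=> UM Uj.
have DU : M :\: U \subset ~: U by rewrite setDE subsetIr.
have -> : [set S : {set T} | (U \subset S) && (S \subset M) && (#|S| == j)] =
    [set B :|: U | B in [set B : {set T} | B \subset M :\: U & #|B| == (j - #|U|)%N]].
  apply/setP => S; rewrite !inE; apply/idP/imsetP.
  - case/andP => /andP [US SM] /eqP Sj; exists (S :\: U).
      by rewrite inE setSD //= cardsD (setIidPr US) Sj.
    apply/setP => x; rewrite !inE.
    by case: (boolP (x \in U)) => [/(subsetP US) ->|]; rewrite ?orbT ?orbF.
  - case=> B; rewrite inE => /andP [BM /eqP Bj] ->.
    have BU : [disjoint B & U] by rewrite disjoints_subset (subset_trans BM).
    rewrite subsetUr subUset UM (subset_trans BM (subsetDl _ _)) /=.
    by rewrite cardsU (disjoint_setI0 BU) cards0 subn0 Bj subnK.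
rewrite card_in_imset; first by rewrite cards_draws cardsD (setIidPr UM).
have UK (B : {set T}) : B \subset M :\: U -> (B :|: U) :\: U = B.
  move=> BM; rewrite setDUl setDv setU0; apply/setDidPl.
  by rewrite disjoints_subset (subset_trans BM).
move=> B1 B2; rewrite !inE => /andP [/UK E1 _] /andP [/UK E2 _] /= E.
by rewrite -E1 -E2 E.
Qed.

Lemma sum_draws_subsets (M : {set T}) (j : nat) (P : pred {set T}) (a : {set T} -> R) :
  sum_draws (fun S => \sum_(U : {set T} | (U \subset S) && P U) a U) M j
  = \sum_(U : {set T} | [&& U \subset M, P U & #|U| <= j]%N) a U *+ 'C(#|M| - #|U|, j - #|U|).
Proof.
rewrite /sum_draws (exchange_big_dep (fun U : {set T} => (U \subset M) && P U)) /=; last first.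
  by move=> S U /andP [SM _] /andP [US ->]; rewrite (subset_trans US SM).
rewrite [RHS](eq_bigl (fun U : {set T} => (U \subset M) && P U && (#|U| <= j)%N)); last first.
  by move=> U; rewrite andbA.
rewrite [RHS]big_mkcondr /=; apply: eq_bigr => U /andP [UM PU].
case: leqP => Uj.
  rewrite -(card_draws_between UM Uj) -sumr_const; apply: eq_bigl => S.
  by rewrite !inE PU andbT andbC andbA.
apply: big1 => S /and3P [/andP [_ /eqP Sj] US _].
by have := subset_leq_card US; rewrite Sj; lia.
Qed.

Lemma sum_draws0 (c : {set T} -> R) (M : {set T}) : sum_draws c M 0 = c set0.
Proof.
rewrite /sum_draws (big_pred1 set0) // => S /=.
by rewrite cards_eq0 andb_idl // => /eqP ->; rewrite sub0set.
Qed.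

Lemma sum_draws_setU1 (c : {set T} -> R) (N : {set T}) (e : T) (j : nat) : e \notin N ->
  sum_draws c (e |: N) j.+1 = sum_draws c N j.+1 + sum_draws (fun X => c (e |: X)) N j.
Proof.
move=> eN; rewrite /sum_draws (bigID (fun Y : {set T} => e \in Y)) /= addrC.
have subU1 (Y : {set T}) : e \notin Y -> (Y \subset e |: N) = (Y \subset N).
  move=> eY; apply/idP/idP => YN; last by rewrite (subset_trans YN) ?subsetU1.
  apply/subsetP => x xY; move: (subsetP YN x xY); rewrite !inE.
  by case: eqP => [Ex|//]; move: eY; rewrite -Ex xY.
have notN (Y : {set T}) : e \in Y -> (Y \subset N) = false.
  by move=> eY; apply/negbTE/negP => /subsetP/(_ e eY); apply/negP.
congr (_ + _).
  apply: eq_bigl => Y; case: (boolP (e \in Y)) => eY; first by rewrite andbF notN.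
  by rewrite andbT subU1.
rewrite (reindex_onto (fun X : {set T} => e |: X) (fun Y => Y :\ e)) /=; last first.
  by move=> Y /andP [_ eY]; rewrite setD1K.
apply: eq_bigl => X; rewrite setU11 andbT.
case: (boolP (e \in X)) => eX.
  rewrite notN //=; apply/negbTE/negP => /andP [_ /eqP EX].
  by move: eX; rewrite -EX setD11.
rewrite setU1K // eqxx andbT cardsU1 eX add1n eqSS.
by rewrite subUset sub1set setU11 /= subU1.
Qed.

Lemma draws_exchange_const (X : Type) (c : {set T} -> X) (M : {set T}) (j : nat) :
  (forall (A : {set T}) t u, A \subset M -> #|A| = j -> t \in A -> u \in M -> u \notin A ->
     c A = c (u |: A :\ t)) ->
  forall A B : {set T}, A \subset M -> B \subset M -> #|A| = j -> #|B| = j -> c B = c A.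
Proof.
move=> exch A B AM BM Aj Bj; move Et: #|B :\: A| => t.
elim: t B BM Bj Et => [|t IH] B BM Bj Et.
  move/cards0_eq/eqP: Et; rewrite setD_eq0 => BA.
  by have /eqP -> : B == A by rewrite eqEcard BA Aj Bj leqnn.
have [x xBA] : exists x, x \in B :\: A by apply/set0Pn; rewrite -card_gt0 Et.
have [y yAB] : exists y, y \in A :\: B.
  apply/set0Pn; rewrite -card_gt0 cardsD.
  have : (#|B :&: A| < #|B|)%N.
    by rewrite cardsD in Et; have := subset_leq_card (subsetIl B A); lia.
  by rewrite setIC; lia.
move: xBA yAB; rewrite !inE => /andP [xA xB] /andP [yB yA].
rewrite (exch B x y) //; last exact: (subsetP AM).
apply: IH.
- by rewrite subUset sub1set (subsetP AM) //= (subset_trans (subD1set B x)).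
- by rewrite cardsU1 !inE negb_and yB orbT /= (cardsD1 x B) xB in Bj *; lia.
- have -> : (y |: B :\ x) :\: A = (B :\: A) :\ x.
    apply/setP => z; rewrite !inE; case: (z =P y) => [->|]; rewrite ?yA ?andbF //=.
    by rewrite andbCA.
  by rewrite (cardsD1 x (B :\: A)) inE xA xB in Et; lia.
Qed.
End Draws.

Section RookPlacements.
Variables (I J : finType).
Implicit Types (S M N : {set I * J}) (RS : {set I}) (CS : {set J}).

Definition non_attacking S :=
  [forall x in S, forall y in S, (x.1 == y.1) || (x.2 == y.2) ==> (x == y)].

Lemma non_attackingP S :
  reflect {in S &, forall x y, x.1 = y.1 \/ x.2 = y.2 -> x = y} (non_attacking S).
Proof.
apply: (iffP forall_inP) => [H x y xS yS E | H x xS].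
  have /forall_inP/(_ y yS) := H x xS.
  by case: E => ->; rewrite eqxx ?orbT => /eqP.
apply/forall_inP => y yS; apply/implyP => /orP E.
by apply/eqP; apply: H => //; case: E => /eqP; [left|right].
Qed.

Lemma non_attackingS S N : N \subset S -> non_attacking S -> non_attacking N.
Proof.
move=> NS /non_attackingP H; apply/non_attackingP => x y xN yN.
by apply: H; apply: (subsetP NS).
Qed.

Lemma non_attacking_setU1 RS CS N x : N \subset setX RS CS -> non_attacking N ->
  x.1 \notin RS -> x.2 \notin CS -> non_attacking (x |: N).
Proof.
move=> NB /non_attackingP mN xR xC.
have out y : y \in N -> x.1 <> y.1 /\ x.2 <> y.2.
  move=> /(subsetP NB); case: y => a b; rewrite in_setX => /andP [aR bC].
  by split=> E; [move: xR | move: xC]; rewrite E ?aR ?bC.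
apply/non_attackingP => y z; rewrite !inE => /predU1P [->|yN] /predU1P [->|zN] //.
- by have [? ?] := out z zN; case.
- by have [? ?] := out y yN; case=> /esym.
- exact: mN.
Qed.

Lemma non_attacking_extend RS CS S (K : nat) : S \subset setX RS CS -> non_attacking S ->
  (#|S| <= K <= minn #|RS| #|CS|)%N ->
  exists2 M : {set I * J}, [/\ M \subset setX RS CS, non_attacking M & #|M| = K] & S \subset M.
Proof.
move Et: (K - #|S|)%N => t; elim: t S Et => [|t IH] S Et SB mS /andP [SK KB].
  by exists S; [split => //; lia | exact: subxx].
have /andP [SR SC] : (#|S| < #|RS|)%N && (#|S| < #|CS|)%N by rewrite -leq_min; lia.
have [a aR] : exists a, a \in RS :\: fst @: S.
  apply/set0Pn; rewrite -card_gt0 cardsD subn_gt0.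
  exact: leq_ltn_trans (subset_leq_card (subsetIr _ _)) (leq_ltn_trans (leq_imset_card _ _) SR).
have [b bC] : exists b, b \in CS :\: snd @: S.
  apply/set0Pn; rewrite -card_gt0 cardsD subn_gt0.
  exact: leq_ltn_trans (subset_leq_card (subsetIr _ _)) (leq_ltn_trans (leq_imset_card _ _) SC).
move: aR bC; rewrite !inE => /andP [aS aR] /andP [bS bC].
have abS : (a, b) \notin S by apply: contra aS => abS; apply/imsetP; exists (a, b).
have abB : (a, b) |: S \subset setX RS CS by rewrite subUset sub1set in_setX aR bC.
have abN : non_attacking ((a, b) |: S).
  apply: (@non_attacking_setU1 (fst @: S) (snd @: S)) => //.
  by apply/subsetP => -[x1 x2] xS; rewrite in_setX (imset_f fst xS) (imset_f snd xS).
have abK : (#|(a, b) |: S| <= K <= minn #|RS| #|CS|)%N.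
  by rewrite cardsU1 abS KB andbT -subn_gt0 Et.
have abt : (K - #|(a, b) |: S|)%N = t by rewrite cardsU1 abS add1n subnS Et.
have [M MK SM] := IH ((a, b) |: S) abt abB abN abK.
by exists M => //; apply: subset_trans SM; apply: subsetU1.
Qed.

Lemma non_attacking_setD1 RS CS M (A : {set I * J}) t u :
  M \subset setX RS CS -> non_attacking M -> A \subset M -> t \in A -> u \in M -> u \notin A ->
  A :\ t \subset setX (RS :\ t.1 :\ u.1) (CS :\ t.2 :\ u.2).
Proof.
move=> MB /non_attackingP mM AM tA uM uA; apply/subsetP => y; rewrite !inE => /andP [yt yA].
have yM := subsetP AM y yA; have tM := subsetP AM t tA.
have yu : y != u by apply: contraNneq uA => <-.
have ne z : z \in M -> y != z -> (y.1 != z.1) && (y.2 != z.2).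
  move=> zM; rewrite -negb_or; apply: contra => /orP E; apply/eqP.
  by apply: mM => //; case: E => /eqP; auto.
have /andP [yu1 yu2] := ne u uM yu; have /andP [yt1 yt2] := ne t tM yt.
have := subsetP MB y yM; case: y {yt yA yM yu ne} yu1 yu2 yt1 yt2 => a b /= au1 bu2 at1 bt2.
by rewrite !in_setX au1 bu2 at1 bt2 => /andP [-> ->].
Qed.

Variables (F : idomainType).
Hypothesis F_char0 : has_char0 F.

Definition draw_sums_vanish RS CS (K d : nat) (c : {set I * J} -> F) :=
  forall M, M \subset setX RS CS -> non_attacking M -> #|M| = K -> sum_draws c M d = 0.

Lemma draw_sums_vanish_exchange RS CS (K d : nat) (c : {set I * J} -> F) t u :
  t \in setX RS CS -> u \in setX RS CS -> draw_sums_vanish RS CS K.+1 d.+1 c ->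
  draw_sums_vanish (RS :\ t.1 :\ u.1) (CS :\ t.2 :\ u.2) K d
    (fun X => c (t |: X) - c (u |: X)).
Proof.
move=> tB uB van N NB mN NK.
have sumU1 x : x \in setX RS CS -> x.1 \notin RS :\ t.1 :\ u.1 -> x.2 \notin CS :\ t.2 :\ u.2 ->
    sum_draws (fun X => c (x |: X)) N d = - sum_draws c N d.+1.
  move=> xB xR xC; have xN : x \notin N.
    by apply: contra xR => /(subsetP NB); case: x {xB xC} => a b; rewrite in_setX => /andP [].
  have xNB : x |: N \subset setX RS CS.
    rewrite subUset sub1set xB; apply: subset_trans NB _.
    by apply: setXS; apply: subset_trans (subD1set _ _) (subD1set _ _).
  have := van _ xNB (non_attacking_setU1 NB mN xR xC); rewrite cardsU1 xN NK.
  by rewrite (sum_draws_setU1 c d xN) => /(_ erefl) /eqP; rewrite addrC addr_eq0 => /eqP.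
by rewrite /sum_draws sumrB -!/(sum_draws _ _ _) !sumU1 ?subrr // !inE eqxx ?andbF.
Qed.

(* For cells t, u of a K-placement M, the differences
   c (t |: X) - c (u |: X) satisfy the hypothesis one level down on the board
   without the rows and columns of t and u.  So c is invariant under exchanges
   inside M, hence constant on the d-subsets of M, and the vanishing sum over
   them is that constant times a nonzero binomial coefficient. *)
Lemma draw_sums_vanish_eq0 (d : nat) RS CS (K : nat) (c : {set I * J} -> F) :
  (d <= K)%N -> (K + d <= minn #|RS| #|CS|)%N -> draw_sums_vanish RS CS K d c ->
  forall S, S \subset setX RS CS -> non_attacking S -> #|S| = d -> c S = 0.
Proof.
elim: d RS CS K c => [|d IH] RS CS K c dK KB van S SB mS Sd.
  have hK : (#|(set0 : {set I * J})| <= K <= minn #|RS| #|CS|)%N by rewrite cards0; lia.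
  have [M [MB mM MK] _] := non_attacking_extend (sub0set _) (non_attackingS (sub0set S) mS) hK.
  by move: (van M MB mM MK); rewrite sum_draws0 (cards0_eq Sd).
case: K dK KB van => // K dK KB van.
have hK : (#|S| <= K.+1 <= minn #|RS| #|CS|)%N by rewrite Sd; lia.
have [M [MB mM MK] SM] := non_attacking_extend SB mS hK.
have exch (A : {set I * J}) t u : A \subset M -> #|A| = d.+1 -> t \in A -> u \in M -> u \notin A ->
    c A = c (u |: A :\ t).
  move=> AM Ad tA uM uA; have tM := subsetP AM t tA.
  have c2A : c (t |: A :\ t) - c (u |: A :\ t) = 0.
    apply: (IH _ _ K _ dK _ (draw_sums_vanish_exchange (subsetP MB t tM) (subsetP MB u uM) van)).
    - have := card_setD1D1 RS t.1 u.1; have := card_setD1D1 CS t.2 u.2.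
      by clear -KB; lia.
    - exact: non_attacking_setD1 MB mM AM tA uM uA.
    - exact: non_attackingS (subset_trans (subD1set A t) AM) mM.
    - by move: Ad; rewrite (cardsD1 t A) tA add1n => -[].
  by move/eqP: c2A; rewrite subr_eq0 setD1K // => /eqP.
have cM : sum_draws c M d.+1 = c S *+ 'C(K.+1, d.+1).
  rewrite /sum_draws -MK -cards_draws -sumr_const; apply: eq_big => [A|A /andP [AM /eqP Ad]].
    by rewrite !inE.
  exact: draws_exchange_const exch S A SM AM Sd Ad.
move: (van M MB mM MK); rewrite cM -mulr_natr => /eqP; rewrite mulf_eq0.
by rewrite ((pcharf0P F).1 F_char0) eqn0Ngt bin_gt0 dK orbF => /eqP.
Qed.
End RookPlacements.

Section MpolyDegree.
Variables (R : idomainType) (k : nat).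
Implicit Types (p q f g : {mpoly R[k]}) (mu : 'X_{1..k}).

Lemma dhomog_msize_le p d : p \is d.-homog -> (msize p <= d.+1)%N.
Proof. by move=> /dhomog_mf H; rewrite msizeE; apply/bigmax_leqP_seq => mu /H ->. Qed.

Lemma msizeM_leq p q a b : (msize p <= a.+1)%N -> (msize q <= b)%N -> (msize (p * q) <= a + b)%N.
Proof.
have [->|pnz] := eqVneq p 0; first by rewrite mul0r msize0.
have [->|qnz] := eqVneq q 0; first by rewrite mulr0 msize0.
by move=> hp hq; rewrite msizeM // -subn1 leq_subLR add1n -addSn leq_add.
Qed.

Lemma mcoeff_msizeB f g d mu : (msize (g - f) <= d)%N -> (d <= mdeg mu)%N -> g@_mu = f@_mu.
Proof.
move=> gf dmu; rewrite -[g](subrK f) mcoeffD [X in X + _]memN_msupp_eq0 ?add0r //.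
exact/msize_mdeg_ge/(leq_trans gf).
Qed.

Lemma mcoeff_msizeB_eq0 f g d mu : f \is d.-homog -> (msize (g - f) <= d)%N ->
  (d < mdeg mu)%N -> g@_mu = 0.
Proof.
move=> fh gf dmu; rewrite (mcoeff_msizeB gf (ltnW dmu)) (dhomog_nemf_coeff fh) //.
by rewrite neq_ltn dmu orbT.
Qed.

Lemma big_msupp_pred1 p mu0 : \sum_(mu <- msupp p | mu == mu0) p@_mu = p@_mu0.
Proof.
rewrite {3}[p]mpolyE raddf_sum /= big_mkcond /=; apply: eq_bigr => mu _.
by rewrite mcoeffZ mcoeffX eq_sym; case: eqP; rewrite ?mulr1 ?mulr0.
Qed.

Lemma pihomogM_dhomog p t d e : t \is e.-homog ->
  pihomog mdeg d (p * t) = (if (e <= d)%N then pihomog mdeg (d - e) p else 0) * t.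
Proof.
move=> th; pose K := maxn (msize p) d.+1.
rewrite {1}(@pihomog_partitionE _ _ mdeg K p (leq_maxl _ _)) big_distrl raddf_sum /=.
have E (j : 'I_K) : pihomog mdeg d (pihomog mdeg j p * t) =
    if (j + e == d)%N then pihomog mdeg j p * t else 0.
  have hj := dhomogM (pihomogP mdeg j p) th.
  case: eqP => [<-|ne]; first exact: pihomog_dE.
  by apply: (pihomog_ne0 _ hj); apply/eqP => E; apply: ne.
under eq_bigr => j _ do rewrite E.
case: leqP => ed; last first.
  by rewrite mul0r big1 // => j _; case: eqP => // E2; move: ed; rewrite -E2; lia.
have lt : (d - e < K)%N by rewrite /K (leq_trans _ (leq_maxr _ _)) // ltnS leq_subr.
rewrite (bigD1 (Ordinal lt)) //= subnK // eqxx big1 ?addr0 // => j ne.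
case: eqP => // E2; case/eqP: ne; apply: val_inj => /=; lia.
Qed.
End MpolyDegree.

Section GradedVanishingIdeal.
Variables (n m : nat) (Z : 'M[CC]_(n, m) -> Prop).
Local Notation Pnm := (Defs.Poly n m).
Implicit Types (f g p : Pnm).

Lemma vanishing0 : vanishing Z 0.
Proof. by move=> M _; rewrite /evalM meval0. Qed.

Lemma vanishingD p (q : Pnm) : vanishing Z p -> vanishing Z q -> vanishing Z (p + q).
Proof.
by move=> vp vq M ZM; move: (vp M ZM) (vq M ZM); rewrite /evalM mevalD => -> ->; rewrite addr0.
Qed.

Lemma vanishingMl p (q : Pnm) : vanishing Z q -> vanishing Z (p * q).
Proof. by move=> vq M ZM; move: (vq M ZM); rewrite /evalM mevalM => ->; rewrite mulr0. Qed.

Lemma grI0 : grI Z 0.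
Proof. by exists [::]; split=> [q|]; rewrite ?in_nil ?big_nil. Qed.

Lemma topcompE g : topcomp g = pihomog mdeg (msize g).-1 g.
Proof. by rewrite pihomogE. Qed.

Lemma msizeB_topcomp g : g != 0 -> (msize (g - topcomp g) <= (msize g).-1)%N.
Proof.
move=> gnz; rewrite topcompE; have : (0 < msize g)%N by rewrite lt0n msize_poly_eq0.
case Eg: (msize g) => [//|e] _ /=.
rewrite {1}(@pihomog_partitionE _ _ mdeg e.+1 g (eq_leq Eg)) big_ord_recr /= addrK.
apply: leq_trans (msize_sum _ _ _) _; apply/bigmax_leqP => j _.
exact: leq_trans (dhomog_msize_le (pihomogP mdeg j g)) (ltn_ord j).
Qed.

Lemma grI_lift (s : seq (Pnm * Pnm)) (d : nat) :
  (forall q, q \in s -> exists g : Pnm, [/\ g != 0, vanishing Z g & q.2 = topcomp g]) ->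
  exists2 G, vanishing Z G & (msize (G - pihomog mdeg d (\sum_(q <- s) q.1 * q.2)) <= d)%N.
Proof.
elim: s => [|q s IH] Hs.
  by exists 0; rewrite ?big_nil ?pihomog0 ?subrr ?msize0 //; exact: vanishing0.
have [G vG hG] : exists2 G, vanishing Z G &
    (msize (G - pihomog mdeg d (\sum_(q <- s) q.1 * q.2)) <= d)%N.
  by apply: IH => q' h; apply: Hs; rewrite inE h orbT.
have [g [gnz vg qg]] := Hs q (mem_head _ _).
set e := (msize g).-1; set b := if (e <= d)%N then pihomog mdeg (d - e) q.1 else 0.
exists (b * g + G); first exact: vanishingD (vanishingMl _ vg) vG.
have th : topcomp g \is e.-homog by rewrite topcompE pihomogP.
rewrite big_cons pihomogD qg (pihomogM_dhomog _ _ th) -/b.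
rewrite opprD addrACA -mulrBr; apply: leq_trans (msizeD_le _ _) _; rewrite geq_max hG andbT.
rewrite /b; case: (leqP e d) => ed; last by rewrite mul0r msize0.
rewrite -{2}(subnK ed); apply: msizeM_leq (msizeB_topcomp gnz).
exact: dhomog_msize_le (pihomogP _ _ _).
Qed.

(* [msize (g - f) <= d] says that g is f plus terms of degree < d. *)
Lemma grI_dhomogP f d : f \is d.-homog ->
  grI Z f <-> exists2 g, vanishing Z g & (msize (g - f) <= d)%N.
Proof.
move=> fh; split=> [[s [Hs Ef]]|[g vg gf]].
  by have [G vG] := grI_lift d Hs; rewrite -Ef (pihomog_dE fh); exists G.
have [->|fnz] := eqVneq f 0; first exact: grI0.
have fmu := mlead_supp fnz; set mu := mlead f in fmu.
have dmu : mdeg mu = d by apply: (dhomog_mf fh).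
have gmu : mu \in msupp g by rewrite mcoeff_msupp (mcoeff_msizeB gf) ?dmu // -mcoeff_msupp.
have gnz : g != 0 by apply: contraTneq gmu => ->; rewrite msupp0.
have sg : msize g = d.+1.
  apply/eqP; rewrite eqn_leq -{2}dmu msize_mdeg_lt // andbT -[g](subrK f).
  by apply: leq_trans (msizeD_le _ _) _; rewrite geq_max (dhomog_msize_le fh) (leq_trans gf).
exists [:: (1, f)]; split; last by rewrite big_seq1 mul1r.
move=> q; rewrite inE => /eqP -> /=; exists g; split=> //.
rewrite topcompE sg /= -[g](subrK f) pihomogD (pihomog_dE fh) pihomogE big_seq_cond.
rewrite big_pred0 ?add0r // => mu'; apply/andP => -[/msize_mdeg_lt lt /eqP E].
by move: (leq_trans lt gf); rewrite E ltnn.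
Qed.
End GradedVanishingIdeal.

Section RookMonomials.
Variables n m : nat.
Local Notation N := (nvar n m).
Local Notation cell := ('I_n * 'I_m)%type.
Local Notation Pnm := (Defs.Poly n m).
Implicit Types (U S : {set cell}) (mu : 'X_{1..N}) (p f g : Pnm) (M : 'M[CC]_(n, m)).

Definition mnm_of_set U : 'X_{1..N} := [multinom (enum_val i \in U : nat) | i < N].

Definition mnm_supp mu : {set cell} := [set x | mu (enum_rank x) != 0%N].

Lemma mnm_of_setE U x : mnm_of_set U (enum_rank x) = (x \in U).
Proof. by rewrite mnmE enum_rankK. Qed.

Lemma mnm_supp_of_set U : mnm_supp (mnm_of_set U) = U.
Proof. by apply/setP => x; rewrite inE mnm_of_setE; case: (x \in U). Qed.

Lemma mdeg_cells mu : mdeg mu = (\sum_(x : cell) mu (enum_rank x))%N.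
Proof.
by rewrite mdegE [RHS](big_enum_val (A := predT)); apply: eq_bigr => i _; rewrite enum_valK.
Qed.

Lemma mdeg_mnm_of_set U : mdeg (mnm_of_set U) = #|U|.
Proof. by rewrite mdeg_cells card_sum_nat; apply: eq_bigr => x _; rewrite mnm_of_setE. Qed.

Lemma mnm_supp_le mu x : ((x \in mnm_supp mu) <= mu (enum_rank x))%N.
Proof. by rewrite inE; case: (mu _). Qed.

Lemma card_mnm_supp mu : (#|mnm_supp mu| <= mdeg mu)%N.
Proof. by rewrite mdeg_cells card_sum_nat leq_sum // => x _; apply: mnm_supp_le. Qed.

Lemma mnm_of_suppK mu : (mdeg mu <= #|mnm_supp mu|)%N -> mnm_of_set (mnm_supp mu) = mu.
Proof.
rewrite mdeg_cells card_sum_nat => le; apply/mnmP => i; rewrite -(enum_valK i) mnm_of_setE.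
exact: sum_leq_eq (mnm_supp_le mu) le _.
Qed.

Definition ones M : {set cell} := [set x | M x.1 x.2 == 1].

Definition zero_one M := forall i j, M i j = 0 \/ M i j = 1.

Definition mx_of_set S : 'M[CC]_(n, m) := \matrix_(i, j) ((i, j) \in S)%:R.

Lemma mx_of_set_eq1 S i j : (mx_of_set S i j == 1) = ((i, j) \in S).
Proof. by rewrite mxE; case: (_ \in S); rewrite ?eqxx // eq_sym oner_eq0. Qed.

Lemma zero_one_mx_of_set S : zero_one (mx_of_set S).
Proof. by move=> i j; rewrite mxE; case: (_ \in S); [right|left]. Qed.

Lemma ones_mx_of_set S : ones (mx_of_set S) = S.
Proof. by apply/setP => -[i j]; rewrite inE mx_of_set_eq1. Qed.

Lemma Zrook_mx_of_set (k : nat) S : non_attacking S -> #|S| = k -> Zrook k (mx_of_set S).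
Proof.
move=> /non_attackingP mS Sk; split; first exact: zero_one_mx_of_set.
- by have := ones_mx_of_set S; rewrite /ones => ->.
- move=> i; apply/card_le1_eqP => j j'; rewrite !inE !mx_of_set_eq1 => jS j'S.
  by have [] := mS _ _ j'S jS (or_introl erefl).
- move=> j; apply/card_le1_eqP => i i'; rewrite !inE !mx_of_set_eq1 => iS i'S.
  by have [] := mS _ _ i'S iS (or_intror erefl).
Qed.

Lemma Zrook_ones (k : nat) M : Zrook k M -> [/\ zero_one M, non_attacking (ones M) & #|ones M| = k].
Proof.
case=> zM Mk rows cols; split=> //; apply/non_attackingP => -[i j] [i' j'].
rewrite !inE /= => x1 x2 [/= E|/= E]; rewrite -E in x2 *; congr pair.
  by apply: (card_le1_eqP (rows i)); rewrite inE.
by apply: (card_le1_eqP (cols j)); rewrite inE.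
Qed.

Lemma evalM_mono M mu : zero_one M -> evalM M 'X_[mu] = (mnm_supp mu \subset ones M)%:R.
Proof.
move=> zM; rewrite /evalM mevalX; case: (boolP (mnm_supp mu \subset ones M)) => H.
  apply: big1 => i _; case: (boolP (mu i == 0%N)) => [/eqP -> //|nz].
  have : enum_val i \in ones M by apply: (subsetP H); rewrite inE enum_valK.
  by rewrite inE => /eqP ->; rewrite expr1n.
have [x xS xM] := subsetPn H; rewrite (bigD1 (enum_rank x)) //= enum_rankK.
move: xS xM; rewrite !inE => nz; case: (zM x.1 x.2) => ->; last by rewrite eqxx.
by rewrite expr0n (negbTE nz) mul0r.
Qed.

Definition supp_coef p U : CC := \sum_(mu <- msupp p | mnm_supp mu == U) p@_mu.

Lemma evalM_supp_coef M p : zero_one M ->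
  evalM M p = \sum_(U : {set cell} | U \subset ones M) supp_coef p U.
Proof.
move=> zM; rewrite {1}[p]mpolyE /evalM raddf_sum /=.
under eq_bigr => mu _ do rewrite mevalZ -/(evalM M 'X_[mu]) (evalM_mono _ zM).
rewrite /supp_coef; under [RHS]eq_bigr => U _ do rewrite big_mkcond /=.
rewrite (exchange_big _ _ (msupp p)) /=; apply: eq_bigr => mu _; rewrite -big_mkcondr /=.
case: (boolP (mnm_supp mu \subset ones M)) => H.
  by rewrite (big_pred1 (mnm_supp mu)) ?mulr1 // => U; rewrite /= eq_sym andb_idl // => /eqP ->.
by rewrite big_pred0 ?mulr0 // => U; apply: contraNF H => /andP [UM /eqP ->].
Qed.

Lemma supp_coef_gt f g (d : nat) U : f \is d.-homog -> (msize (g - f) <= d)%N ->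
  (d < #|U|)%N -> supp_coef g U = 0.
Proof.
move=> fh gf dU; rewrite /supp_coef big1_seq // => mu /andP [/eqP sU _].
by apply: (mcoeff_msizeB_eq0 fh gf); rewrite (leq_trans dU) // -sU card_mnm_supp.
Qed.

Lemma supp_coef_eq f g (d : nat) U : f \is d.-homog -> (msize (g - f) <= d)%N ->
  #|U| = d -> supp_coef g U = f@_(mnm_of_set U).
Proof.
move=> fh gf Ud.
rewrite -(mcoeff_msizeB (mu := mnm_of_set U) gf); last by rewrite mdeg_mnm_of_set Ud.
rewrite -(big_msupp_pred1 g (mnm_of_set U)).
rewrite /supp_coef big_seq_cond [RHS]big_seq_cond; apply: eq_bigl => mu.
case: (boolP (mu \in msupp g)) => //= gmu.
apply/eqP/eqP => [sU|->]; last exact: mnm_supp_of_set.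
rewrite -sU mnm_of_suppK // sU Ud leqNgt; apply: contraTN gmu => lt.
by rewrite mcoeff_msupp (mcoeff_msizeB_eq0 fh gf lt) eqxx.
Qed.

Lemma vanishing_Zrook_supp_coef (k : nat) g S : vanishing (Zrook k) g ->
  non_attacking S -> #|S| = k -> \sum_(U : {set cell} | U \subset S) supp_coef g U = 0.
Proof.
move=> van mS Sk; have := van _ (Zrook_mx_of_set mS Sk).
rewrite evalM_supp_coef; last exact: zero_one_mx_of_set.
by rewrite ones_mx_of_set.
Qed.

Definition lower_expansion (d : nat) f := exists gam : {set cell} -> CC,
  forall S, non_attacking S -> #|S| = d ->
    f@_(mnm_of_set S) = \sum_(U : {set cell} | (U \subset S) && (#|U| < d)%N) gam U.

(* A j-subset of a k-placement lies in C(k - j, d - j) of its d-subsets. *)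
Definition draw_weight (k d : nat) U : CC := 'C(k - #|U|, d - #|U|)%:R.

Lemma lower_expansion_of_vanishing (k d : nat) f g : f \is d.-homog -> (d <= k)%N ->
  (k + d <= minn n m)%N -> vanishing (Zrook k) g -> (msize (g - f) <= d)%N ->
  lower_expansion d f.
Proof.
move=> fh dk kd van gf; pose b := draw_weight k d.
have b_neq0 U : b U != 0 by rewrite pnatr_eq0 -lt0n bin_gt0 leq_sub2r.
pose c S := \sum_(U : {set cell} | (U \subset S) && (#|U| <= d)%N) supp_coef g U / b U.
have vanc : draw_sums_vanish [set: 'I_n] [set: 'I_m] k d c.
  move=> M _ mM Mk; rewrite -(vanishing_Zrook_supp_coef van mM Mk) sum_draws_subsets Mk.
  rewrite [RHS](bigID (fun U : {set cell} => #|U| <= d)%N) /= [X in _ + X]big1 ?addr0; last first.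
    by move=> U /andP [_]; rewrite -ltnNge; apply: supp_coef_gt fh gf.
  apply: eq_big => [U|U _]; first by rewrite andbb.
  by rewrite -mulr_natr divfK.
have KB : (k + d <= minn #|[set: 'I_n]| #|[set: 'I_m]|)%N by rewrite !cardsT !card_ord.
have c0 := draw_sums_vanish_eq0 (pchar_num _) dk KB vanc.
exists (fun U => - (supp_coef g U / b U)) => S mS Sd.
have SB : S \subset setX [set: 'I_n] [set: 'I_m] by apply/subsetP => -[i j]; rewrite in_setX !inE.
have := c0 S SB mS Sd; rewrite /c (bigD1 S) /=; last by rewrite subxx Sd leqnn.
rewrite /b /draw_weight Sd subnn bin0 divr1 (supp_coef_eq fh gf Sd) sumrN.
move=> /eqP; rewrite addr_eq0 => /eqP ->.
congr (- _); apply: eq_bigl => U; case: (boolP (U \subset S)) => //= US.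
have [->|nUS] := eqVneq U S; first by rewrite Sd ltnn leqnn.
have : (#|U| < #|S|)%N by apply: proper_card; rewrite properEneq nUS US.
by rewrite Sd andbT => lt; rewrite lt (ltnW lt).
Qed.

Lemma vanishing_of_lower_expansion (k d : nat) f : f \is d.-homog -> (d <= k)%N ->
  lower_expansion d f -> exists2 g, vanishing (Zrook k) g & (msize (g - f) <= d)%N.
Proof.
move=> fh dk [gam Hgam]; have ff : (msize (f - f) <= d)%N by rewrite subrr msize0.
pose b := draw_weight k d.
(* At a k-placement M, f evaluates to the sum over U in M with #|U| < d of
   supp_coef f U + gam U * b U (double counting for its degree d part), and h is
   built to evaluate to the same. *)
pose h := \sum_(U : {set cell} | (#|U| < d)%N) (supp_coef f U + gam U * b U) *: 'X_[mnm_of_set U].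
exists (f - h); last first.
  rewrite addrAC subrr add0r msizeN; apply: leq_trans (msize_sum _ _ _) _.
  apply/bigmax_leqP => U Ud; apply: leq_trans (msizeZ_le _ _) _.
  by rewrite msizeX mdeg_mnm_of_set.
move=> M /Zrook_ones [zM mM Mk].
pose low := \sum_(U : {set cell} | (U \subset ones M) && (#|U| < d)%N)
  (supp_coef f U + gam U * b U).
have eh : evalM M h = low.
  rewrite /h /evalM raddf_sum /low [RHS]big_mkcondl /=; apply: eq_bigr => U _.
  rewrite mevalZ -/(evalM M _) evalM_mono // mnm_supp_of_set.
  by case: (U \subset ones M); rewrite ?mulr1 ?mulr0.
have ef : evalM M f = low.
  rewrite /low big_split /= evalM_supp_coef // (bigID (fun U => #|U| < d)%N) /=; congr (_ + _).
  transitivity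
    (sum_draws (fun U => \sum_(V : {set cell} | (V \subset U) && (#|V| < d)%N) gam V) (ones M) d).
    rewrite /sum_draws big_mkcond [RHS]big_mkcond; apply: eq_bigr => U _.
    case: (boolP (U \subset ones M)) => //= UM; case: ltngtP => // Ud.
      exact: supp_coef_gt fh ff Ud.
    by rewrite (supp_coef_eq fh ff Ud) (Hgam U (non_attackingS UM mM) Ud).
  rewrite sum_draws_subsets Mk; apply: eq_big => [V|V _]; last by rewrite mulr_natr.
  by case: ltnP; rewrite ?andbF // => /ltnW ->; rewrite andbT.
by rewrite /evalM mevalB -!/(evalM M _) ef eh subrr.
Qed.

Lemma grI_Zrook (k d : nat) f : f \is d.-homog -> (d <= k)%N -> (k + d <= minn n m)%N ->
  grI (Zrook k) f <-> lower_expansion d f.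
Proof.
move=> fh dk kd; rewrite (grI_dhomogP _ fh); split=> [[g van gf]|].
  exact: lower_expansion_of_vanishing fh dk kd van gf.
exact: vanishing_of_lower_expansion.
Qed.
End RookMonomials.

Theorem mainTheorem18 (n m r d : nat) :
  (d <= r)%N -> (r < minn m n)%N -> (d <= minn m n - r - 1)%N ->
  @Rdeg_iso n m d (@Zrook n m r) (@Zrook n m r.+1).
Proof.
move=> dr rmn dmn; have rd : (r.+1 + d <= minn n m)%N by rewrite minnC; lia.
have rd' : (r + d <= minn n m)%N by apply: leq_trans rd; rewrite leq_add2r.
have grI_eq (f : Defs.Poly n m) : f \is d.-homog -> grI (Zrook r) f <-> grI (Zrook r.+1) f.
  by move=> fh; apply: iff_trans (grI_Zrook fh dr rd') (iff_sym (grI_Zrook fh (leqW dr) rd)).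
exists id; split=> // [a b ha hb|c a b _ _|g a _|c hc].
- by apply: grI_eq; rewrite rpredB.
- by rewrite subrr; exact: grI0.
- by rewrite subrr; exact: grI0.
- by exists c; rewrite ?subrr //; exact: grI0.
Qed.
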